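(* Let $\mathbf{u}=(u_n)$ be an a-sequence with bounded ratio sequence $(q_n)$. Write $S^*_\mathbf{u}=\{m_1<m_2<\cdots\}$ and $\delta_k=m_{k+1}-m_k$. Then: (a) if the sequence $(\delta_k)$ is unbounded, there are $\mathfrak{c}$ many elements $x\in\mathbb{T}$ with $\varrho_\mathbf{u}(x,0)=\frac{1}{q_\mathbf{u}}$; (b) if the sequence $(\delta_k)$ is bounded, then $|B^{\varrho_\mathbf{u}}_{1/q_\mathbf{u}}(0)|=\mathfrak{c}$.
   Context: An a-sequence is a strictly increasing sequence of integers $\mathbf{u}=(u_n)_{n\in\mathbb{N}}$ with $u_n\mid u_{n+1}$ for all $n$. Its ratios are $q_0=u_0$ and $q_n=u_n/u_{n-1}$ ($n>0$); $q_\mathbf{u}=\limsup_n q_n$ and $S^*_\mathbf{u}=\{m\in\mathbb{N}: q_m=q_\mathbf{u}\}$ (infinite when the ratios are bounded). $\mathbb{T}=\mathbb{R}/\mathbb{Z}$, $\|x\|$ is the distance from $x$ to the nearest integer, $d(x,y)=\|x-y\|$, $\varrho_\mathbf{u}(x,y)=\sup_n\max\{d(x,y),d(u_nx,u_ny)\}$, and $B^{\varrho_\mathbf{u}}_\varepsilon(0)=\{x\in\mathbb{T}:\varrho_\mathbf{u}(x,0)<\varepsilon\}$. $\mathfrak{c}$ denotes the cardinality of the continuum. *)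

From HB Require Import structures.
From mathcomp Require Import all_boot all_order all_algebra.
From mathcomp Require Import all_classical all_reals all_analysis.
Set Implicit Arguments. Unset Strict Implicit. Unset Printing Implicit Defensive.
Import Order.TTheory GRing.Theory Num.Theory.
Local Open Scope classical_set_scope.
Local Open Scope ring_scope.

(* An a-sequence: strictly increasing integers with u_n | u_{n+1}.
   (Such a sequence is automatically positive, so nat is used.) *)
Definition a_sequence (u : nat -> nat) : Prop :=
  forall n : nat, (u n < u n.+1)%N /\ (u n %| u n.+1)%N.

Definition a_ratio (u : nat -> nat) (n : nat) : nat :=
  match n with 0 => u 0 | k.+1 => (u k.+1 %/ u k)%N end.

Definition qlim (R : realType) (u : nat -> nat) : R :=
  limn_sup (fun n => ((a_ratio u n)%:R : R)).

Definition Sstar (R : realType) (u : nat -> nat) : set nat :=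
  [set m | (a_ratio u m)%:R = qlim R u].

Definition dnorm (R : realType) (x : R) : R :=
  Num.min (x - (Num.floor x)%:~R) ((Num.floor x)%:~R + 1 - x).

(* rho_u(x,0) = sup_n max{ ||x||, ||u_n x|| }; points of T = R/Z are
   represented by their representatives in [0,1). *)
Definition rho0 (R : realType) (u : nat -> nat) (x : R) : R :=
  sup [set Num.max (dnorm x) (dnorm ((u n)%:R * x)) | n in [set: nat]].

Definition torus (R : realType) : set R := [set x | 0 <= x < 1].

From HB Require Import structures.
From mathcomp Require Import all_boot all_order all_algebra.
From mathcomp Require Import all_classical all_reals all_analysis.
From mathcomp Require Import ring lra zify.
Set Implicit Arguments. Unset Strict Implicit. Unset Printing Implicit Defensive.
Import Order.TTheory GRing.Theory Num.Theory.
Local Open Scope classical_set_scope.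
Local Open Scope ring_scope.

(* For a strictly increasing s with q_(s j) = q_u for all j, consider the
   alternating series x = sum_j (-1)^j / u_(s j).  For s_(j0-1) <= n < s_(j0),
   u_n x is an integer plus the alternating tail sum_(j >= j0) (-1)^j u_n / u_(s j),
   whose first term u_n / u_(s j0) is at most 1/q_u; hence rho_u(x, 0) <= 1/q_u.
   When the gaps of s grow, taking n = s_j - 1 makes the distance tend to 1/q_u;
   when the gaps are bounded and the ratios bounded, the second tail term stays
   bounded below, keeping every distance uniformly below 1/q_u.  Choosing
   s j = p (2j + b j) along a subsequence p of S*_u, with b ranging over the
   binary sequences, yields continuum many such points x. *)

Section NearestInteger.
Variable R : realType.
Implicit Types (t : R) (k : int).

Lemma dnorm_le_dist t k : dnorm t <= `|t - k%:~R|.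
Proof.
rewrite /dnorm; set f := Num.floor t.
have /andP[h1 h2] := floor_itv t; rewrite -/f intrD in h1 h2.
have [kf|fk] := lerP k f.
- have hk : k%:~R <= f%:~R :> R by rewrite ler_int.
  rewrite ge_min; apply/orP; left; apply: le_trans (ler_norm _); lra.
- have : (f + 1)%:~R <= k%:~R :> R by rewrite ler_int; lia.
  rewrite intrD => hk; rewrite ge_min; apply/orP; right.
  rewrite distrC; apply: le_trans (ler_norm _); lra.
Qed.

Lemma dnorm_dist t k : `|t - k%:~R| <= 2^-1 -> dnorm t = `|t - k%:~R|.
Proof.
move=> hk; apply/eqP; rewrite eq_le dnorm_le_dist /=; move: hk.
rewrite /dnorm; set f := Num.floor t.
have /andP[h1 h2] := floor_itv t; rewrite -/f intrD in h1 h2.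
have : (k <= f - 1 \/ k = f \/ k = f + 1 \/ f + 2 <= k)%R by lia.
rewrite ler_norml => -[hk|[->|[->|hk]]] /andP[a b].
- move: hk; rewrite -(ler_int R) intrD => hk; lra.
- rewrite le_min; apply/andP; split; rewrite ler_norml; apply/andP; split; lra.
- rewrite le_min intrD; apply/andP; split; rewrite ler_norml; apply/andP; split; lra.
- move: hk; rewrite -(ler_int R) intrD => hk; lra.
Qed.

Lemma dnorm_le_half t : dnorm t <= 2^-1.
Proof.
rewrite /dnorm; have /andP[h1 h2] := floor_itv t; rewrite intrD in h2.
by rewrite ge_min; case: (lerP (t - (Num.floor t)%:~R) 2^-1) => h; [|apply/orP; right]; lra.
Qed.

Lemma dnorm_mul_le_rho0 (u : nat -> nat) t n : dnorm ((u n)%:R * t) <= rho0 u t.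
Proof.
apply: (@le_trans _ _ (Num.max (dnorm t) (dnorm ((u n)%:R * t)))).
  by rewrite le_max lexx orbT.
apply: ub_le_sup; last by exists n.
by exists 2^-1 => _ [k _ <-]; rewrite ge_max !dnorm_le_half.
Qed.

Lemma rho0_le (u : nat -> nat) t (e : R) :
  dnorm t <= e -> (forall n, dnorm ((u n)%:R * t) <= e) -> rho0 u t <= e.
Proof.
move=> h0 hn; apply: ge_sup.
  by exists (Num.max (dnorm t) (dnorm ((u 0%N)%:R * t))), 0%N.
by move=> _ [n _ <-]; rewrite ge_max h0 hn.
Qed.

End NearestInteger.

Lemma signr_cases (R : realType) n : (-1) ^+ n = 1 :> R \/ (-1) ^+ n = -1 :> R.
Proof.
by rewrite -signr_odd; case: (odd n); [right; rewrite expr1|left; rewrite expr0].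
Qed.

Section AlternatingSums.
Variable R : realType.
Implicit Types a c : nat -> R.

Definition altsum a n : R := \sum_(i < n) (-1) ^+ i * a i.

Lemma altsum0 a : altsum a 0 = 0.
Proof. by rewrite /altsum big_ord0. Qed.

Lemma altsumS a n : altsum a n.+1 = a 0%N - altsum (fun i => a i.+1) n.
Proof.
rewrite /altsum big_ord_recl expr0 mul1r -sumrN; congr (_ + _).
by apply: eq_bigr => i _; rewrite exprS mulN1r mulNr.
Qed.

Lemma altsum_split a n k :
  altsum a (n + k) = altsum a n + (-1) ^+ n * altsum (fun i => a (n + i)%N) k.
Proof.
rewrite /altsum big_split_ord /= mulr_sumr; congr (_ + _).
by apply: eq_bigr => i _; rewrite exprD mulrA.
Qed.

Lemma altsum_int a n : (forall i, (i < n)%N -> a i \is a Num.int) ->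
  altsum a n \is a Num.int.
Proof.
move=> ha; apply: rpred_sum => i _.
by rewrite rpredM ?ha // rpredX // rpredN rpred1.
Qed.


Lemma altsum_scale k a n : k * altsum a n = altsum (fun i => k * a i) n.
Proof. by rewrite /altsum mulr_sumr; apply: eq_bigr => i _; rewrite mulrCA. Qed.

Lemma altsum_bounds c : (forall i, 0 <= c i) -> (forall i, c i.+1 <= c i) ->
  forall n, 0 <= altsum c n <= c 0%N.
Proof.
move=> c0 cd n; elim: n c c0 cd => [|n IH] c c0 cd; first by rewrite altsum0 lexx c0.
have /andP[h1 h2] := IH (fun i => c i.+1) (fun i => c0 i.+1) (fun i => cd i.+1).
have := cd 0%N; have := c0 1%N; rewrite altsumS => *; apply/andP; split; lra.
Qed.

Lemma altsum_bracket c : (forall i, 0 <= c i) -> (forall i, c i.+1 <= c i) ->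
  forall n, (2 <= n)%N -> c 0%N - c 1%N <= altsum c n <= c 0%N - c 1%N + c 2%N.
Proof.
move=> c0 cd [|[|n]] // _; rewrite !altsumS.
have /andP[h1 h2] := altsum_bounds (fun i => c0 i.+2) (fun i => cd i.+2) n.
apply/andP; split; lra.
Qed.

Section Tails.
Variable c : nat -> R.
Hypotheses (c_ge0 : forall i, 0 <= c i) (c_noninc : forall i, c i.+1 <= c i).

Let tail_ge0 n i : 0 <= c (n + i)%N.
Proof. exact: c_ge0. Qed.

Let tail_noninc n i : c (n + i.+1)%N <= c (n + i)%N.
Proof. by rewrite addnS. Qed.

Lemma altsum_tail_split n k :
  (-1) ^+ n * (altsum c (n + k) - altsum c n) = altsum (fun i => c (n + i)%N) k.
Proof. by rewrite altsum_split addrAC subrr add0r signrMK. Qed.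

Lemma altsum_tail_bounds n k : (n <= k)%N ->
  0 <= (-1) ^+ n * (altsum c k - altsum c n) <= c n.
Proof.
move=> /subnKC <-; rewrite altsum_tail_split.
by have := altsum_bounds (tail_ge0 n) (tail_noninc n) (k - n); rewrite addn0.
Qed.

Lemma altsum_tail_bracket n k : (n.+2 <= k)%N ->
  c n - c n.+1 <= (-1) ^+ n * (altsum c k - altsum c n) <= c n - c n.+1 + c n.+2.
Proof.
move=> hk; rewrite -(subnKC (ltnW (ltnW hk))) altsum_tail_split.
have := altsum_bracket (tail_ge0 n) (tail_noninc n) (_ : 2 <= k - n)%N.
by rewrite addn0 addn1 addn2; apply; lia.
Qed.

(* The sum of the alternating series: the even partial sums increase to it. *)
Definition altlim : R := sup [set altsum c (2 * k)%N | k in [set: nat]].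

Lemma altlim_even_odd k : altsum c (2 * k)%N <= altlim <= altsum c (2 * k).+1.
Proof.
have sgn j : (-1) ^+ (2 * j)%N = 1 :> R by rewrite exprM sqrrN !expr1n.
have even_odd j l : altsum c (2 * j)%N <= altsum c (2 * l).+1.
  have [h|h] := leqP (2 * j)%N (2 * l).+1.
    by have /andP[+ _] := altsum_tail_bounds h; rewrite sgn mul1r subr_ge0.
  have /andP[+ _] := altsum_tail_bounds (ltnW h).
  by rewrite exprS sgn mulr1 mulN1r oppr_ge0 subr_le0.
apply/andP; split.
  apply: ub_le_sup; last by exists k.
  by exists (altsum c 1) => _ [j _ <-]; have := even_odd j 0%N; rewrite muln0.
apply: ge_sup; first by exists (altsum c 0), 0%N.
by move=> _ [j _ <-]; apply: even_odd.
Qed.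

Lemma altlim_bracket n :
  c n - c n.+1 <= (-1) ^+ n * (altlim - altsum c n) <= c n - c n.+1 + c n.+2.
Proof.
have /andP[hA hB] := altlim_even_odd n.+1.
have /andP[a1 a2] := @altsum_tail_bracket n (2 * n.+1)%N ltac:(lia).
have /andP[b1 b2] := @altsum_tail_bracket n (2 * n.+1).+1 ltac:(lia).
by have [e|e] := signr_cases R n; rewrite e in a1 a2 b1 b2 *; apply/andP; split; lra.
Qed.

End Tails.

End AlternatingSums.

Lemma leq_incr_dist (f : nat -> nat) : (forall k, (f k < f k.+1)%N) ->
  forall i j, (i <= j)%N -> (f i + (j - i) <= f j)%N.
Proof.
move=> hf i j /subnK <-; rewrite addnK; elim: (j - i)%N => [|k IH]; first by rewrite addn0.
by rewrite addSn addnS; apply: leq_ltn_trans IH (hf _).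
Qed.

Section ASequence.
Variable u : nat -> nat.
Hypothesis hu : a_sequence u.

Lemma a_seq_ltn : {homo u : m n / (m < n)%N}.
Proof. by apply: homo_ltn ltn_trans _ => n; case: (hu n). Qed.

Lemma a_seq_leq : {homo u : m n / (m <= n)%N}.
Proof. exact: ltnW_homo a_seq_ltn. Qed.

Lemma a_seq_dvd m n : (m <= n)%N -> (u m %| u n)%N.
Proof.
move=> /subnK <-; elim: (n - m)%N => [|k IH] //.
by rewrite addSn; apply: dvdn_trans IH (proj2 (hu _)).
Qed.

Lemma a_seq_gt0 n : (0 < u n)%N.
Proof.
case: n => [|n]; last by apply: leq_ltn_trans (a_seq_ltn (ltnSn n)).
case: (hu 0%N) => lt01; rewrite dvdn_eq => /eqP e.
by rewrite lt0n; apply: contraTneq lt01 => u00; rewrite -e u00 mul0n.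
Qed.

Lemma a_seq_double m n : (m < n)%N -> (2 * u m <= u n)%N.
Proof.
move=> lt_mn; have /dvdnP[k ek] := a_seq_dvd (ltnW lt_mn).
have := a_seq_ltn lt_mn; have := a_seq_gt0 m; rewrite ek.
by case: k {ek} => [|[|k]]; rewrite ?mul0n ?mul1n ?ltnn //; nia.
Qed.

Lemma a_seq_ratioS n : u n.+1 = (a_ratio u n.+1 * u n)%N.
Proof. by rewrite /= divnK //; case: (hu n). Qed.

Lemma a_ratio_ge2 n : (0 < n)%N -> (2 <= a_ratio u n)%N.
Proof.
case: n => // n _; have := a_seq_double (ltnSn n); have := a_seq_gt0 n.
rewrite a_seq_ratioS; nia.
Qed.

Lemma a_seq_exp2 m d : (2 ^ d * u m <= u (m + d))%N.
Proof.
elim: d => [|d IH]; first by rewrite expn0 mul1n addn0.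
rewrite expnS -mulnA addnS; apply: leq_trans (a_seq_double (ltnSn _)).
by rewrite leq_pmul2l.
Qed.

Lemma a_seq_expB B : (forall n, (a_ratio u n <= B)%N) ->
  forall m d, (u (m + d) <= B ^ d * u m)%N.
Proof.
move=> hB m; elim=> [|d IH]; first by rewrite expn0 mul1n addn0.
by rewrite addnS a_seq_ratioS expnS -mulnA; apply: leq_mul (hB _) IH.
Qed.

End ASequence.

Section NatFractions.
Variable R : realType.

Lemma lef_natV (m n : nat) : (0 < m)%N -> (m <= n)%N -> (n%:R^-1 : R) <= m%:R^-1.
Proof.
by move=> m0 mn; rewrite lef_pV2 ?posrE ?ltr0n ?ler_nat //; apply: leq_trans mn.
Qed.

Lemma ltf_natV (m n : nat) : (0 < m)%N -> (m < n)%N -> (n%:R^-1 : R) < m%:R^-1.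
Proof.
by move=> m0 mn; rewrite ltf_pV2 ?posrE ?ltr0n ?ltr_nat //; apply: ltn_trans mn.
Qed.

Lemma ler_nat_frac (x y x' y' : nat) : (0 < y)%N -> (0 < y')%N ->
  (x * y' <= x' * y)%N -> (x%:R / y%:R : R) <= x'%:R / y'%:R.
Proof.
move=> y0 y'0 h; rewrite ler_pdivrMr ?ltr0n // mulrAC ler_pdivlMr ?ltr0n //.
by rewrite -!natrM ler_nat.
Qed.

End NatFractions.

Section Fractions.
Variables (R : realType) (u : nat -> nat).
Hypothesis hu : a_sequence u.

Definition ufrac n k : R := (u n)%:R / (u k)%:R.

Let u_gt0 := a_seq_gt0 hu.

Lemma ufrac_le_den n k k' : (k <= k')%N -> ufrac n k' <= ufrac n k.
Proof. by move=> h; apply: ler_nat_frac; rewrite // leq_mul2l a_seq_leq ?orbT. Qed.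

Lemma ufrac_ratio k : ufrac k k.+1 = (a_ratio u k.+1)%:R^-1.
Proof.
rewrite /ufrac a_seq_ratioS // natrM invfM mulrCA divff ?mulr1 //.
by rewrite pnatr_eq0 -lt0n.
Qed.

Lemma ufrac_le_ratio n k : (n < k)%N -> ufrac n k <= (a_ratio u k)%:R^-1.
Proof.
case: k => // k lt_nk; rewrite -div1r -[1]mulr1n; apply: ler_nat_frac => //.
  by apply: leq_trans (a_ratio_ge2 hu _).
rewrite mul1n (a_seq_ratioS hu k); have : (u n <= u k)%N by apply: a_seq_leq.
nia.
Qed.

Lemma ufrac_le_half_ratio n k : (n.+1 < k)%N -> ufrac n k <= (2 * a_ratio u k)%:R^-1.
Proof.
case: k => [|[|k]] // lt_nk; rewrite -div1r -[1]mulr1n; apply: ler_nat_frac => //.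
  by rewrite muln_gt0; apply: leq_trans (a_ratio_ge2 hu _).
rewrite mul1n (a_seq_ratioS hu k.+1).
have := a_seq_double hu (ltnSn k); have : (u n <= u k)%N by apply: a_seq_leq => //; lia.
nia.
Qed.

Lemma ufrac_le_exp2 n d : ufrac n (n + d) <= (2 ^ d)%:R^-1.
Proof.
rewrite -div1r -[1]mulr1n; apply: ler_nat_frac; rewrite ?expn_gt0 //.
by rewrite mul1n mulnC; apply: a_seq_exp2.
Qed.

Lemma ufrac_ge_expB B : (forall n, (a_ratio u n <= B)%N) -> (0 < B)%N ->
  forall n d, (B ^ d)%:R^-1 <= ufrac n (n + d).
Proof.
move=> hB B0 n d; rewrite -div1r -[1]mulr1n; apply: ler_nat_frac; rewrite ?expn_gt0 ?B0 //.
by rewrite mul1n mulnC a_seq_expB.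
Qed.

Lemma ufrac_halve n k k' : (k < k')%N -> ufrac n k' <= ufrac n k / 2.
Proof.
move=> h; rewrite /ufrac -mulrA -invfM -natrM; apply: ler_nat_frac.
- exact: u_gt0.
- by rewrite muln_gt0 u_gt0.
- by rewrite leq_mul2l mulnC a_seq_double ?orbT.
Qed.

End Fractions.

Definition alt_point (R : realType) (u s : nat -> nat) : R :=
  altlim (fun j => (u (s j))%:R^-1).

Section AltPoint.
Variables (R : realType) (u s : nat -> nat) (Q : nat).
Hypotheses (hu : a_sequence u) (s_incr : forall k, (s k < s k.+1)%N).
Hypotheses (s_ratio : forall j, a_ratio u (s j) = Q) (s0_ge2 : (2 <= s 0%N)%N).

Local Notation x := (alt_point R u s).
Local Notation term j := ((u (s j))%:R^-1 : R).

Let term_ge0 j : 0 <= term j.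
Proof. by rewrite invr_ge0. Qed.

Let term_noninc j : term j.+1 <= term j.
Proof. by apply: lef_natV; [exact: a_seq_gt0|apply: a_seq_leq => //; apply: ltnW]. Qed.

Let s_ltn : {homo s : i j / (i < j)%N}.
Proof. exact: homo_ltn ltn_trans s_incr. Qed.

Let s_ge2 j : (2 <= s j)%N.
Proof. by apply: leq_trans s0_ge2 _; apply: ltnW_homo s_ltn _ _ _. Qed.

Lemma alt_point_Q_ge2 : (2 <= Q)%N.
Proof. by rewrite -(s_ratio 0); apply: a_ratio_ge2 => //; apply: leq_trans s0_ge2. Qed.

Lemma first_above n : exists j0, (n < s j0)%N /\ forall i, (i < j0)%N -> (s i <= n)%N.
Proof.
have /ex_minnP[j0 hj0 hmin] : exists j, (n < s j)%N.
  by exists n.+1; have := leq_incr_dist s_incr (leq0n n.+1); lia.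
by exists j0; split=> // i lt_ij; rewrite leqNgt; apply/negP => /hmin; rewrite leqNgt lt_ij.
Qed.

(* s i <= n makes u_(s i) divide u_n, so the first j0 terms of u_n x are integers. *)
Lemma mul_alt_point_bracket n j0 :
  (n < s j0)%N -> (forall i, (i < j0)%N -> (s i <= n)%N) ->
  exists z : int, ufrac R u n (s j0) - ufrac R u n (s j0.+1) <=
     (-1) ^+ j0 * ((u n)%:R * x - z%:~R) <=
   ufrac R u n (s j0) - ufrac R u n (s j0.+1) + ufrac R u n (s j0.+2).
Proof.
move=> hn hi.
have /intrP[z hz] : (u n)%:R * altsum (fun j => term j) j0 \is a Num.int.
  rewrite altsum_scale; apply: altsum_int => i lt_ij.
  rewrite -natr_div ?natr_int // ?unitfE ?pnatr_eq0 -?lt0n ?a_seq_gt0 //.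
  by apply: a_seq_dvd => //; apply: hi.
exists z; rewrite -hz.
have /andP[h1 h2] := altlim_bracket term_ge0 term_noninc j0.
have un0 : 0 <= (u n)%:R :> R by [].
have := ler_wpM2l un0 h1; have := ler_wpM2l un0 h2.
rewrite /ufrac /alt_point; set S := altsum _ _; set L := altlim _.
by move=> *; apply/andP; split; nra.
Qed.

Let ufrac_next n j : ufrac R u n (s j.+1) <= ufrac R u n (s j).
Proof. by apply: ufrac_le_den => //; apply/ltnW/s_ltn. Qed.

Let ufrac_first n j : (n < s j)%N -> ufrac R u n (s j) <= Q%:R^-1.
Proof. by rewrite -(s_ratio j); apply: ufrac_le_ratio. Qed.

Lemma dnorm_mul_alt_point n j0 :
  (n < s j0)%N -> (forall i, (i < j0)%N -> (s i <= n)%N) ->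
  ufrac R u n (s j0) - ufrac R u n (s j0.+1) <= dnorm ((u n)%:R * x) <=
  ufrac R u n (s j0) - ufrac R u n (s j0.+1) + ufrac R u n (s j0.+2).
Proof.
move=> hn hi; have [z /andP[h1 h2]] := mul_alt_point_bracket hn hi.
have := ufrac_next n j0; have := ufrac_next n j0.+1; have := ufrac_first hn.
have : (Q%:R^-1 : R) <= 2^-1 by apply: lef_natV => //; apply: alt_point_Q_ge2.
move=> *; have dist_eq : `|(u n)%:R * x - z%:~R| = (-1) ^+ j0 * ((u n)%:R * x - z%:~R).
  by rewrite -(normrMsign j0) ger0_norm //; lra.
by rewrite (@dnorm_dist _ _ z) dist_eq //; lra.
Qed.

Lemma alt_point_bounds : 0 <= x <= (2 * Q)%:R^-1.
Proof.
have /andP[h1 h2] := altlim_bracket term_ge0 term_noninc 0.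
rewrite expr0 mul1r altsum0 subr0 in h1 h2.
have := term_noninc 0; have := term_noninc 1; have := term_ge0 2.
have : term 0 <= (2 * Q)%:R^-1.
  apply: le_trans (_ : ufrac R u 0 (s 0) <= _).
    by rewrite /ufrac ler_peMl ?invr_ge0 // ler1n a_seq_gt0.
  by rewrite -(s_ratio 0); apply: ufrac_le_half_ratio.
by rewrite /alt_point => *; apply/andP; split; lra.
Qed.

Lemma dnorm_alt_point : dnorm x <= Q%:R^-1 / 2.
Proof.
have /andP[x0 x1] := alt_point_bounds.
apply: le_trans (dnorm_le_dist x 0) _.
by rewrite mulr0z subr0 ger0_norm // -invfM -natrM mulnC.
Qed.

Lemma rho0_alt_point_le : rho0 u x <= Q%:R^-1.
Proof.
have Q0 : 0 < (Q%:R^-1 : R) by rewrite invr_gt0 ltr0n; have := alt_point_Q_ge2; lia.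
apply: rho0_le => [|n]; first by have := dnorm_alt_point; lra.
have [j0 [hn hi]] := first_above n.
have /andP[_ +] := dnorm_mul_alt_point hn hi.
by have := ufrac_first hn; have := ufrac_next n j0.+1; lra.
Qed.

(* At n = s j - 1 the first tail term is u_n / u_(s j) = 1/Q, and a long gap
   after s j makes the correction u_n / u_(s (j+1)) small. *)
Lemma rho0_alt_point_sparse :
  (forall j, (j.+1 + s j <= s j.+1)%N) -> rho0 u x = Q%:R^-1.
Proof.
move=> gap; apply/eqP; rewrite eq_le rho0_alt_point_le /=.
have near j : Q%:R^-1 - j.+1%:R^-1 <= rho0 u x.
  have [n sj] : exists n, s j = n.+1 by exists (s j).-1; have := s_ge2 j; lia.
  have hi i : (i < j)%N -> (s i <= n)%N by move=> /s_ltn; rewrite sj.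
  have /andP[+ _] := @dnorm_mul_alt_point n j ltac:(lia) hi.
  rewrite sj ufrac_ratio // -sj s_ratio => lo.
  have d : s j.+1 = (n + (s j.+1 - n))%N by have := gap j; lia.
  have small : ufrac R u n (s j.+1) <= j.+1%:R^-1.
    rewrite d; apply: le_trans (ufrac_le_exp2 R hu _ _) _; apply: lef_natV => //.
    apply: leq_trans (_ : j.+1 <= s j.+1 - n)%N (ltnW (ltn_expl _ _)) => //.
    by have := gap j; lia.
  by apply: le_trans _ (dnorm_mul_le_rho0 u x n); apply: le_trans lo; rewrite lerD2l lerN2.
rewrite leNgt; apply/negP => /ltr_add_invr[j]; have := near j.
by set e := j.+1%:R^-1; lra.
Qed.

(* In the critical case n = s j0 - 1, bounded ratios and gaps give
   u_n / u_(s (j0+1)) >= B^-(G+1), keeping every distance B^-(G+1)/2 below 1/Q. *)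
Lemma rho0_alt_point_lt B G : (forall n, (a_ratio u n <= B)%N) ->
  (forall j, (s j.+1 <= s j + G)%N) -> rho0 u x < Q%:R^-1.
Proof.
move=> hB gap.
have QB : (Q <= B)%N by rewrite -(s_ratio 0).
have Q2 := alt_point_Q_ge2.
set K : R := (B ^ G.+1)%:R^-1.
have K0 : 0 < K by rewrite invr_gt0 ltr0n expn_gt0; lia.
have KQ : K <= Q%:R^-1.
  by apply: lef_natV; [lia|rewrite expnS; have := expn_gt0 B G; nia].
apply: le_lt_trans (_ : rho0 u x <= Q%:R^-1 - K / 2) _; last lra.
apply: rho0_le => [|n]; first by have := dnorm_alt_point; lra.
have [j0 [hn hi]] := first_above n.
have /andP[_ up] := dnorm_mul_alt_point hn hi.
have c12 := ufrac_next n j0.+1.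
have [lt|eq] : (n.+1 < s j0)%N \/ n.+1 = s j0 by lia.
- have := ufrac_le_half_ratio R hu lt; rewrite s_ratio natrM invfM mulrC; lra.
- have c2 : ufrac R u n (s j0.+2) <= ufrac R u n (s j0.+1) / 2.
    by apply: ufrac_halve => //; apply: s_incr.
  have c1 : K <= ufrac R u n (s j0.+1).
    have d : s j0.+1 = (n + (s j0.+1 - n))%N by have := s_incr j0; lia.
    rewrite d; apply: le_trans (ufrac_ge_expB R hu hB _ _ _); last lia.
    apply: lef_natV; first by rewrite expn_gt0; lia.
    by apply: leq_pexp2l; [lia|have := gap j0; lia].
  by have := ufrac_first hn; lra.
Qed.

End AltPoint.

(* If s and s' agree below j and s j < s' j < s (j+1), the first difference
   1/u_(s j) - 1/u_(s' j) >= 1/(2 u_(s j)) outweighs everything after it. *)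
Lemma alt_point_neq (R : realType) u s s' j : a_sequence u ->
  (forall k, (s k < s k.+1)%N) -> (forall k, (s' k < s' k.+1)%N) ->
  (forall i, (i < j)%N -> s i = s' i) -> (s j < s' j < s j.+1)%N ->
  alt_point R u s != alt_point R u s'.
Proof.
move=> hu hs hs' eq_ij /andP[lt1 lt2]; apply/eqP => e.
have term_ge0 (t : nat -> nat) k : 0 <= ((u (t k))%:R^-1 : R) by rewrite invr_ge0.
have term_noninc t : (forall k, (t k < t k.+1)%N) ->
    forall k, ((u (t k.+1))%:R^-1 : R) <= (u (t k))%:R^-1.
  by move=> ht k; apply: lef_natV; [exact: a_seq_gt0|apply: a_seq_leq => //; apply: ltnW].
have eS : altsum (fun k => (u (s k))%:R^-1 : R) j = altsum (fun k => (u (s' k))%:R^-1) j.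
  by apply: eq_bigr => i _; rewrite eq_ij.
have /andP[h1 _] := altlim_bracket (term_ge0 s) (term_noninc s hs) j.
have /andP[_ h2] := altlim_bracket (term_ge0 s') (term_noninc s' hs') j.
have := term_noninc s' hs' j.+1; have := term_noninc s' hs' j.
have l1 : ((u (s j.+1))%:R^-1 : R) < (u (s' j))%:R^-1.
  by apply: ltf_natV; [exact: a_seq_gt0|exact: a_seq_ltn].
have l2 : ((u (s' j))%:R^-1 : R) <= (u (s j))%:R^-1 / 2.
  rewrite -invfM -natrM; apply: lef_natV; first by rewrite muln_gt0 a_seq_gt0.
  by rewrite mulnC; apply: a_seq_double.
move: h1 h2; rewrite /alt_point in e; rewrite e eS.
by have [->|->] := signr_cases R j => *; lra.
Qed.

Definition bit_select (p : nat -> nat) (b : nat -> bool) (j : nat) : nat :=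
  p (2 * j + b j)%N.

Section BitSelect.
Variable p : nat -> nat.
Hypothesis p_incr : forall k, (p k < p k.+1)%N.

Let p_ltn : {homo p : i j / (i < j)%N}.
Proof. exact: homo_ltn ltn_trans p_incr. Qed.

Let p_leq : {homo p : i j / (i <= j)%N}.
Proof. exact: ltnW_homo p_ltn. Qed.

Lemma bit_select_incr b j : (bit_select p b j < bit_select p b j.+1)%N.
Proof. by apply: p_ltn; case: (b j); case: (b j.+1); lia. Qed.

Lemma bit_select0_ge b : (p 0%N <= bit_select p b 0)%N.
Proof. exact: p_leq. Qed.

Lemma bit_select_sparse b : (forall k, (p k + k <= p k.+1)%N) ->
  forall j, (j.+1 + bit_select p b j <= bit_select p b j.+1)%N.
Proof.
move=> gap j; rewrite /bit_select.
have h1 : (p (2 * j + b j) <= p (2 * j).+1)%N by apply: p_leq; case: (b j); lia.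
have h2 : (p (2 * j).+2 <= p (2 * j.+1 + b j.+1))%N by apply: p_leq; lia.
by have := gap (2 * j).+1; lia.
Qed.

Lemma bit_select_dense b D : (forall k, (p k.+1 <= p k + D)%N) ->
  forall j, (bit_select p b j.+1 <= bit_select p b j + 3 * D)%N.
Proof.
move=> gap j; rewrite /bit_select.
have h1 : (p (2 * j) <= p (2 * j + b j))%N by apply: p_leq; lia.
have h2 : (p (2 * j.+1 + b j.+1) <= p (2 * j).+3)%N by apply: p_leq; case: (b j.+1); lia.
by have := gap (2 * j)%N; have := gap (2 * j).+1; have := gap (2 * j).+2; lia.
Qed.

Lemma alt_point_bits_inj (R : realType) u : a_sequence u ->
  injective (fun b => alt_point R u (bit_select p b)).
Proof.
move=> hu b b' /= e; apply: funext => k; apply/eqP; apply: contraT => ne.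
have [j neq_j min_j] := ex_minnP (ex_intro (fun j => b j != b' j) k ne).
have eq_ij i : (i < j)%N -> bit_select p b i = bit_select p b' i.
  by move=> lt_ij; rewrite /bit_select; congr (p (_ + nat_of_bool _)); apply/eqP;
    apply: contraT => /min_j; rewrite leqNgt lt_ij.
have lt_sel (c c' : nat -> bool) : c j = false -> c' j = true ->
    (bit_select p c j < bit_select p c' j < bit_select p c j.+1)%N.
  by move=> cj c'j; rewrite /bit_select cj c'j; apply/andP; split; apply: p_ltn; lia.
move: neq_j; case bj: (b j); case b'j: (b' j) => // _.
- by move/eqP: (alt_point_neq R hu (bit_select_incr b') (bit_select_incr b)
    (fun i h => esym (eq_ij i h)) (lt_sel _ _ b'j bj)); rewrite e.
- by move/eqP: (alt_point_neq R hu (bit_select_incr b) (bit_select_incr b') eq_ij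
    (lt_sel _ _ bj b'j)).
Qed.

End BitSelect.

Local Open Scope card_scope.

(* Dedekind cuts: a real is determined by the rationals below it. *)
Lemma card_R_le_bits (R : realType) : [set: R] #<= [set: nat -> bool].
Proof.
apply/pcard_injP.
exists (fun x : R => fun n => `[< exists q : rat, pickle q = n /\ ratr q < x >]).
have cut_neq (x y : R) : x < y ->
    (fun n => `[< exists q : rat, pickle q = n /\ ratr q < x >]) <>
    (fun n => `[< exists q : rat, pickle q = n /\ ratr q < y >]).
  move=> lt_xy e; have [q] := rat_in_itvoo lt_xy; rewrite in_itv /= => /andP[xq qy].
  have := congr1 (fun f => f (pickle q)) e => /=.
  have -> : `[< exists q0 : rat, pickle q0 = pickle q /\ ratr q0 < y >] = true.
    by apply/asboolP; exists q.
  move/asboolP => [q' [/(pcan_inj pickleK) -> qx]].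
  by have := lt_trans qx xq; rewrite ltxx.
move=> x y _ _ e; have [xy|yx|//] := ltgtP x y.
- by have := cut_neq _ _ xy; rewrite e.
- by have := cut_neq _ _ yx; rewrite e.
Qed.

Lemma card_eqT_bits (R : realType) (A : set R) (f : (nat -> bool) -> R) :
  injective f -> (forall b, A (f b)) -> A #= [set: R].
Proof.
move=> f_inj fA; apply: Cantor_Bernstein; first exact: card_leT.
apply: card_le_trans (card_R_le_bits R) _.
have /(card_eqPle _ _).1[_ le_bits] : f @` [set: nat -> bool] #= [set: nat -> bool].
  by apply: inj_card_eq => x y _ _; apply: f_inj.
by apply: card_le_trans le_bits _; apply: subset_card_le => _ [b _ <-]; apply: fA.
Qed.

Lemma card_alt_points (R : realType) u p Q (P : R -> Prop) : a_sequence u ->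
  (forall k, (p k < p k.+1)%N) -> (2 <= p 0%N)%N -> (forall i, a_ratio u (p i) = Q) ->
  (forall b, P (alt_point R u (bit_select p b))) ->
  [set x : R | torus x /\ P x] #= [set: R].
Proof.
move=> hu p_incr p0 p_ratio hP.
apply: (card_eqT_bits (alt_point_bits_inj p_incr (R := R) hu)) => b; split=> //.
have s0 : (2 <= bit_select p b 0)%N := leq_trans p0 (bit_select0_ge p_incr b).
have /andP[x0 x1] :=
  alt_point_bounds R hu (bit_select_incr p_incr b) (fun i => p_ratio _) s0.
apply/andP; split=> //; apply: le_lt_trans x1 _.
have := alt_point_Q_ge2 hu (fun i => p_ratio _) s0.
by move=> Q2; rewrite invf_lt1 ?ltr0n ?ltr1n ?muln_gt0; lia.
Qed.

Lemma Sstar_enum (R : realType) u (m : nat -> nat) : range m = Sstar R u ->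
  qlim R u = (a_ratio u (m 0%N))%:R /\ forall k, a_ratio u (m k) = a_ratio u (m 0%N).
Proof.
move=> hm; have mS k : Sstar R u (m k) by rewrite -hm; exists k.
have hq : qlim R u = (a_ratio u (m 0%N))%:R by rewrite (mS 0%N).
by split=> // k; apply/eqP; rewrite -(eqr_nat R) -hq; apply/eqP; apply: mS.
Qed.

Theorem propositionC (R : realType) (u : nat -> nat) (hu : a_sequence u)
  (hbnd : exists B : nat, forall n : nat, (a_ratio u n <= B)%N)
  (m : nat -> nat) (hm_incr : forall k : nat, (m k < m k.+1)%N)
  (hm_enum : range m = Sstar R u) :
  ((~ exists D : nat, forall k : nat, (m k.+1 - m k <= D)%N) ->
     [set x : R | torus x /\ rho0 u x = (qlim R u)^-1] #= [set: R]) /\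
  ((exists D : nat, forall k : nat, (m k.+1 - m k <= D)%N) ->
     [set x : R | torus x /\ rho0 u x < (qlim R u)^-1] #= [set: R]).
Proof.
have [-> m_ratio] := Sstar_enum hm_enum.
have m_ltn : {homo m : i j / (i < j)%N} := homo_ltn ltn_trans hm_incr.
have m2 : (2 <= m 2%N)%N by have := leq_incr_dist hm_incr (leq0n 2); lia.
split=> [_|[D hD]].
- pose p i := m (i * i + 2)%N.
  have p_incr k : (p k < p k.+1)%N by apply: m_ltn; lia.
  have p_gap k : (p k + k <= p k.+1)%N.
    rewrite /p; have := leq_incr_dist hm_incr (leq_addr (2 * k + 1) (k * k + 2)).
    have -> : (k.+1 * k.+1 + 2 = k * k + 2 + (2 * k + 1))%N by ring.
    by rewrite addKn; lia.
  apply: (card_alt_points hu p_incr m2 (fun i => m_ratio _)) => b.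
  exact: (rho0_alt_point_sparse R hu (bit_select_incr p_incr b) (fun j => m_ratio _)
    (leq_trans m2 (bit_select0_ge p_incr b)) (bit_select_sparse p_incr b p_gap)).
- have [B hB] := hbnd; pose p i := m (i + 2)%N.
  have p_incr k : (p k < p k.+1)%N by apply: hm_incr.
  have p_gap k : (p k.+1 <= p k + D)%N by have := hD (k + 2)%N; rewrite /p addSn; lia.
  apply: (card_alt_points hu p_incr m2 (fun i => m_ratio _)) => b.
  exact: (rho0_alt_point_lt R hu (bit_select_incr p_incr b) (fun j => m_ratio _)
    (leq_trans m2 (bit_select0_ge p_incr b)) hB (bit_select_dense p_incr b p_gap)).
Qed.
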